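(* Let $n_0$ be a nonnegative bounded measurable function on $(0,\infty)$ with $\lim_{x\to\infty}x^2n_0(x)=0$, and let $n$ be the global solution of the Kompaneets problem with initial data $n_0$. If $n_0$ is not identically $0$, then $n_t(x)>0$ for every $x>0$, $t>0$.
   Context: The Kompaneets problem: for $x>0$, $t>0$, $\partial_t n = \partial_x J$ with $J(x,n) = x^2\partial_x n + (x^2-2x)n + n^2$, together with $\lim_{x\to\infty} J(x,n_t)=0$; no boundary condition at $x=0$. $n_t(x)=n(x,t)$; the global solution is the unique nonnegative solution in $C([0,\infty);L^1)\cap L^\infty_{loc}([0,\infty);L^\infty)\cap C^{2,1}((0,\infty)^2)$. *)

From HB Require Import structures.
From mathcomp Require Import all_boot all_order all_algebra.
From mathcomp Require Import all_classical all_reals all_analysis.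
Set Implicit Arguments. Unset Strict Implicit. Unset Printing Implicit Defensive.
Import Order.TTheory GRing.Theory Num.Theory.
Import numFieldNormedType.Exports.
Local Open Scope classical_set_scope.
Local Open Scope ring_scope.

Section Kompaneets.
Variable R : realType.

Definition halfline : set R := `]0, +oo[%classic.

Notation leb := (@lebesgue_measure R).

(* functions are written u t x  (u t = n_t) *)
Definition dx (u : R -> R -> R) : R -> R -> R := fun t x => derive1 (u t) x.
Definition dt (u : R -> R -> R) : R -> R -> R := fun t x => derive1 (fun s => u s x) t.

Definition flux (u : R -> R -> R) : R -> R -> R :=
  fun t x => x ^+ 2 * dx u t x + (x ^+ 2 - 2 * x) * u t x + (u t x) ^+ 2.

Definition uncurry2 (f : R -> R -> R) : R * R -> R := fun p => f p.1 p.2.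

Definition C21 (u : R -> R -> R) : Prop :=
  forall t x, 0 < t -> 0 < x ->
    [/\ derivable (u t) x 1,
        derivable (dx u t) x 1,
        derivable (fun s => u s x) t 1,
        {for (t, x), continuous (uncurry2 u)} &
        {for (t, x), continuous (uncurry2 (dx u))} /\
        {for (t, x), continuous (uncurry2 (dx (dx u)))} /\
        {for (t, x), continuous (uncurry2 (dt u))}].

Definition CL1 (u : R -> R -> R) (u0 : R -> R) : Prop :=
  (forall t, 0 <= t -> leb.-integrable halfline (fun x => (u t x)%:E)) /\
  {ae leb, forall x, halfline x -> u 0 x = u0 x} /\
  (forall t0, 0 <= t0 ->
     (fun t => (\int[leb]_(x in halfline) (`|u t x - u t0 x|)%:E)%E)
       @ within [set t | 0 <= t] (nbhs t0) --> 0%E).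

Definition LinfLoc (u : R -> R -> R) : Prop :=
  forall T, 0 < T -> exists M : R,
    forall t, 0 <= t <= T -> {ae leb, forall x, halfline x -> `|u t x| <= M}.

(* u is a nonnegative solution of the Kompaneets problem with initial datum u0
   in the class C([0,oo);L^1) /\ L^oo_loc([0,oo);L^oo) /\ C^{2,1}((0,oo)^2);
   such a solution is unique, i.e. it is "the global solution". *)
Definition kompaneets_solution (u : R -> R -> R) (u0 : R -> R) : Prop :=
  [/\ (forall t x, 0 < t -> 0 < x -> 0 <= u t x),
      CL1 u u0 /\
      LinfLoc u,
      C21 u,
      (forall t x, 0 < t -> 0 < x -> dt u t x = dx (flux u) t x) &
      (forall t, 0 < t -> flux u t x @[x --> +oo] --> 0)].

End Kompaneets.

(* If n_0 is not a.e. zero, L^1-continuity at t = 0 forbids n from vanishing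
   on (0, t) x (0, oo), so n(s, y) > 0 for some s < t; positivity then spreads
   from (s, y) to (t, x) by a barrier argument.  Let the centre g move linearly
   from y at time s to x at time t and put
     w(τ, ξ) = D exp(-K (τ - s)) (ε^2 - (ξ - g(τ))^2)^3.
   On a rectangle [s, t] x [x1, x2] containing the ε-tube around g we have
   w <= n on the parabolic boundary: w <= 0 off the tube, and w <= D ε^6 < n at
   time s near y.  For K large, w is a strict subsolution of the expanded
   equation n_t = ξ^2 n_ξξ + (ξ^2 + 2n) n_ξ + (2ξ - 2) n wherever 0 <= n < w,
   so by the first- and second-derivative tests n - w has no negative minimum
   on the rectangle.  Hence n(t, x) >= w(t, x) > 0. *)

From HB Require Import structures.
From mathcomp Require Import all_boot all_order all_algebra.
From mathcomp Require Import all_classical all_reals all_analysis.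
From mathcomp Require Import lra ring.
Set Implicit Arguments.
Unset Strict Implicit.
Unset Printing Implicit Defensive.
Import Order.TTheory GRing.Theory Num.Theory.
Import numFieldNormedType.Exports.
Local Open Scope classical_set_scope.
Local Open Scope ring_scope.

Section MinimumTests.
Variable R : realType.

Lemma derive_le0_at_left_min (f : R -> R) (a x0 L : R) : a < x0 -> is_derive x0 1 f L ->
  (forall t, a < t < x0 -> f x0 <= f t) -> L <= 0.
Proof.
move=> ax0 df fmin.
have dfx : derivable f x0 1 by case: df.
rewrite -(derive_val (is_derive := df)) ['D_1 f x0]cvg_at_leftE //.
apply: limr_le.
  rewrite -(cvg_at_leftE (fun h => h^-1 *: ((f \o shift x0) _ - f x0))) //.
  apply: cvg_trans dfx; apply: cvg_app.
  move=> A [e e0 Ae]; exists e => // h he h0; apply: Ae => //.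
  exact/ltr0_neq0.
near=> h; apply: mulr_le0_ge0.
  by rewrite invr_le0; apply: ltW; near: h; exists 1 => /=.
rewrite subr_ge0 [_%:A]mulr1; apply: fmin; near: h.
exists (x0 - a); first by rewrite /= subr_gt0.
move=> h; rewrite /= distrC subr0 => /ltr_normlP [h1 h2] hneg.
apply/andP; split; lra.
Unshelve. all: by end_near. Qed.

Lemma derive_eq0_at_min (f f' : R -> R) (a b x0 : R) : a < x0 -> x0 < b ->
  (forall t, a < t < b -> is_derive t 1 f (f' t)) ->
  (forall t, a < t < b -> f x0 <= f t) -> f' x0 = 0.
Proof.
move=> ax0 x0b df fmin.
have /df dfx0 : a < x0 < b by rewrite ax0 x0b.
have dmin : is_derive x0 1 f 0.
  apply: (@derive1_at_min _ f a b x0).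
  - by rewrite ltW // (lt_trans ax0).
  - by move=> t; rewrite in_itv /= => /df [].
  - by rewrite in_itv /= ax0 x0b.
  - by move=> t; rewrite in_itv /= => /fmin.
by rewrite -(derive_val (is_derive := dfx0)) (derive_val (is_derive := dmin)).
Qed.

Lemma derive2_ge0_at_min (f f' : R -> R) (a b x0 L : R) : a < x0 -> x0 < b ->
  (forall t, a < t < b -> is_derive t 1 f (f' t)) -> is_derive x0 1 f' L ->
  (forall t, a < t < b -> f x0 <= f t) -> 0 <= L.
Proof.
move=> ax0 x0b df ddf fmin.
have f'x0 := derive_eq0_at_min ax0 x0b df fmin.
rewrite leNgt; apply/negP => L0.
have dfx : derivable f' x0 1 by case: ddf.
have cv : (fun h => h^-1 *: (f' (h *: 1 + x0) - f' x0)) @ 0^'+ --> L.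
  rewrite -(derive_val (is_derive := ddf)); apply: cvg_trans dfx; apply: cvg_app.
  move=> A [e e0 Ae]; exists e => // h he h0; apply: Ae => //.
  exact/lt0r_neq0.
(* [f'] is negative just right of [x0], so [f] decreases there by the mean value theorem *)
have [e /= e0 f'neg] := cvgr_lt _ cv _ L0.
pose h := Num.min (e / 2) ((b - x0) / 2).
have h0 : 0 < h by rewrite lt_min; apply/andP; split; lra.
have he : h < e by rewrite /h gt_min; apply/orP; left; lra.
have hb : x0 + h < b.
  have : h <= (b - x0) / 2 by rewrite /h ge_min lexx orbT.
  lra.
have [c cI f_mvt] : exists2 c, c \in `]x0, x0 + h[ &
    f (x0 + h) - f x0 = f' c * (x0 + h - x0).
  apply: MVT; first lra.
    by move=> v; rewrite in_itv /= => /andP [v1 v2]; apply: df; apply/andP; split; lra.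
  apply: derivable_within_continuous => v; rewrite in_itv /= => /andP [v1 v2].
  have /df [] // : a < v < b by apply/andP; split; lra.
move: cI; rewrite in_itv /= => /andP [c1 c2].
have := f'neg (c - x0).
rewrite /ball /= sub0r normrN ger0_norm; last lra.
move=> /(_ ltac:(lra) ltac:(lra)).
rewrite [_%:A]mulr1 subrK f'x0 subr0 -[_ *: _]/(_ * _).
rewrite pmulr_rlt0; last by rewrite invr_gt0; lra.
move=> f'c.
have : f x0 <= f (x0 + h) by apply: fmin; apply/andP; split; lra.
have : f' c * (x0 + h - x0) < 0 by rewrite pmulr_llt0 //; lra.
lra.
Qed.

End MinimumTests.

Lemma quadratic_ge0 (R : realFieldType) (a b q u : R) :
  0 < q -> b ^+ 2 <= 4 * a * q -> 0 <= a * u ^+ 2 - b * u + q.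
Proof.
move=> q0 disc.
have : 0 <= 4 * q * (a * u ^+ 2 - b * u + q).
  have -> : 4 * q * (a * u ^+ 2 - b * u + q) =
      (b * u - 2 * q) ^+ 2 + (4 * a * q - b ^+ 2) * u ^+ 2 by ring.
  by rewrite addr_ge0 ?sqr_ge0 // mulr_ge0 ?sqr_ge0 // subr_ge0.
by rewrite pmulr_rge0 //; lra.
Qed.

Lemma dxE (R : realType) (u : R -> R -> R) (t x : R) : dx u t x = 'D_1 (u t) x.
Proof. exact: derive1E. Qed.

Lemma dtE (R : realType) (u : R -> R -> R) (t x : R) : dt u t x = 'D_1 (u^~ x) t.
Proof. exact: derive1E. Qed.

Lemma dx_flux (R : realType) (n : R -> R -> R) t x :
  derivable (n t) x 1 -> derivable (dx n t) x 1 ->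
  dx (flux n) t x = x ^+ 2 * dx (dx n) t x
     + (x ^+ 2 + 2 * n t x) * dx n t x + (2 * x - 2) * n t x.
Proof.
move=> /derivableP d1 /derivableP d2.
rewrite {1}/dx.
have -> : flux n t = id ^+ 2 * dx n t + (id ^+ 2 - cst 2 * id) * n t + n t ^+ 2.
  by apply/funext.
rewrite derive1E (derive_val (is_derive := is_deriveD _ _)) /= !fctE -!derive1E.
rewrite -![_ *: _]/(_ * _) /dx; ring.
Qed.

Section Barrier.
Variables (R : realType) (D K s y c ε : R).

Definition bump_center (τ : R) : R := y + c * (τ - s).
Definition bump_gap (τ ξ : R) : R := ε ^+ 2 - (ξ - bump_center τ) ^+ 2.
Definition bump_amplitude (τ : R) : R := D * expR (- K * (τ - s)).
Definition barrier (τ ξ : R) : R := bump_amplitude τ * bump_gap τ ξ ^+ 3.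
Definition barrier_dx (τ ξ : R) : R :=
  bump_amplitude τ * (- 6 * (ξ - bump_center τ) * bump_gap τ ξ ^+ 2).
Definition barrier_dxx (τ ξ : R) : R := bump_amplitude τ *
  (- 6 * bump_gap τ ξ ^+ 2 + 24 * (ξ - bump_center τ) ^+ 2 * bump_gap τ ξ).
Definition barrier_dt (τ ξ : R) : R := bump_amplitude τ *
  (- K * bump_gap τ ξ ^+ 3 + 6 * c * (ξ - bump_center τ) * bump_gap τ ξ ^+ 2).

Lemma is_derive_barrier_x (τ ξ : R) : is_derive ξ 1 (barrier τ) (barrier_dx τ ξ).
Proof.
have -> : barrier τ = cst (bump_amplitude τ) *
    (cst (ε ^+ 2) - (id - cst (bump_center τ)) ^+ 2) ^+ 3 by apply/funext.
apply: is_derive_eq.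
by rewrite /barrier_dx /bump_gap /= !fctE -![_ *: _]/(_ * _); ring.
Qed.

Lemma is_derive_barrier_xx (τ ξ : R) : is_derive ξ 1 (barrier_dx τ) (barrier_dxx τ ξ).
Proof.
have -> : barrier_dx τ = cst (bump_amplitude τ) * (cst (- 6) * (id - cst (bump_center τ)) *
    (cst (ε ^+ 2) - (id - cst (bump_center τ)) ^+ 2) ^+ 2) by apply/funext.
apply: is_derive_eq.
by rewrite /barrier_dxx /bump_gap /= !fctE -![_ *: _]/(_ * _); ring.
Qed.

Lemma is_derive_barrier_t (τ ξ : R) : is_derive τ 1 (barrier^~ ξ) (barrier_dt τ ξ).
Proof.
have lin : is_derive τ 1 (cst (- K) * (id - cst s)) (- K).
  by apply: is_derive_eq; rewrite /= !fctE -![_ *: _]/(_ * _); ring.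
have exp_lin := is_derive1_comp (is_derive_expR _) lin.
have -> : barrier^~ ξ = cst D * (expR \o (cst (- K) * (id - cst s))) *
    (cst (ε ^+ 2) - (cst ξ - (cst y + cst c * (id - cst s))) ^+ 2) ^+ 3.
  by apply/funext.
apply: is_derive_eq.
rewrite /barrier_dt /bump_amplitude /bump_gap /bump_center /= !fctE.
by rewrite -![_ *: _]/(_ * _); ring.
Qed.

Lemma barrier_continuous (p : R * R) :
  {for p, continuous (fun q : R * R => barrier q.1 q.2)}.
Proof.
have cst_cont (a : R) : {for p, continuous (fun _ : R * R => a)} by exact: cvg_cst.
have fst_cont : {for p, continuous (fun q : R * R => q.1)} by exact: cvg_fst.
have snd_cont : {for p, continuous (fun q : R * R => q.2)} by exact: cvg_snd.
have pow_cont (f : R * R -> R) (k : nat) :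
    {for p, continuous f} -> {for p, continuous (fun q => f q ^+ k)}.
  move=> cf; apply: (@continuous_comp _ _ _ f (fun z : R => z ^+ k) p cf).
  exact: exprn_continuous.
have exp_cont (f : R * R -> R) :
    {for p, continuous f} -> {for p, continuous (fun q => expR (f q))}.
  move=> cf; apply: (@continuous_comp _ _ _ f expR p cf).
  exact: continuous_expR.
rewrite /barrier /bump_amplitude /bump_gap /bump_center.
apply: continuousM.
  apply: continuousM; first exact: cst_cont.
  by apply: (exp_cont); apply: continuousM; [exact: cst_cont | exact: continuousB].
apply: (pow_cont); apply: continuousB; first exact: cst_cont.
apply: (pow_cont); apply: continuousB; first exact: snd_cont.
apply: continuousD; first exact: cst_cont.
by apply: continuousM; [exact: cst_cont | exact: continuousB].
Qed.

Lemma bump_center_start : bump_center s = y.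
Proof. by rewrite /bump_center subrr mulr0 addr0. Qed.

Lemma bump_center_end (t x : R) : s < t -> c = (x - y) / (t - s) -> bump_center t = x.
Proof.
move=> st cE; rewrite /bump_center cE divfK; first ring.
by rewrite subr_eq0 gt_eqF.
Qed.

Lemma bump_center_between (t x m M τ : R) : s < t -> c = (x - y) / (t - s) ->
  m <= x <= M -> m <= y <= M -> s <= τ <= t -> m <= bump_center τ <= M.
Proof.
move=> st cE /andP [mx xM] /andP [my yM] /andP [sτ τt].
pose θ := (τ - s) / (t - s).
have -> : bump_center τ = (1 - θ) * y + θ * x by rewrite /bump_center /θ cE; ring.
have θ0 : 0 <= θ by apply: divr_ge0; lra.
have θ1 : θ <= 1 by rewrite ler_pdivrMr ?subr_gt0 //; lra.
apply/andP; split; nra.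
Qed.

Lemma bump_amplitude_gt0 (τ : R) : 0 < D -> 0 < bump_amplitude τ.
Proof. by move=> D0; rewrite mulr_gt0 ?expR_gt0. Qed.

Lemma bump_amplitude_le (τ : R) : 0 <= D -> 0 <= K -> s <= τ -> bump_amplitude τ <= D.
Proof.
move=> D0 K0 sτ; rewrite /bump_amplitude ler_piMr // ?expR_ge0 // expR_le1.
by rewrite mulNr oppr_le0 mulr_ge0 // subr_ge0.
Qed.

Lemma barrier_le0 (τ ξ : R) : 0 <= D -> bump_gap τ ξ <= 0 -> barrier τ ξ <= 0.
Proof.
move=> D0 gap0; rewrite /barrier mulr_ge0_le0 ?mulr_ge0 ?expR_ge0 //.
by rewrite exprS mulr_le0_ge0 ?sqr_ge0.
Qed.

Lemma barrier_le0_far (τ ξ : R) :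
  0 <= D -> 0 <= ε -> ε <= `|ξ - bump_center τ| -> barrier τ ξ <= 0.
Proof.
move=> D0 ε0 far; apply: barrier_le0 => //.
by rewrite /bump_gap subr_le0 -(real_normK (num_real (ξ - _))) lerXn2r ?nnegrE.
Qed.

Lemma barrier_le (τ ξ : R) : 0 <= D -> 0 <= K -> s <= τ -> barrier τ ξ <= D * ε ^+ 6.
Proof.
move=> D0 K0 sτ.
have [gap0|gap_gt0] := leP (bump_gap τ ξ) 0.
  by rewrite (le_trans (barrier_le0 D0 gap0)) // mulr_ge0 // exprn_even_ge0.
have gap_le : bump_gap τ ξ <= ε ^+ 2 by rewrite /bump_gap gerBl sqr_ge0.
have -> : ε ^+ 6 = (ε ^+ 2) ^+ 3 by rewrite -exprM.
rewrite /barrier ler_pM ?bump_amplitude_le ?exprn_ge0 ?(ltW gap_gt0) //.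
- by rewrite /bump_amplitude mulr_ge0 ?expR_ge0.
- by rewrite lerXn2r ?nnegrE ?(ltW gap_gt0) ?sqr_ge0.
Qed.

Lemma barrier_start_le (v : R -> R) (ξ : R) : 0 <= D -> 0 <= K -> 0 < ε -> 0 <= v ξ ->
  (`|ξ - y| < ε -> D * ε ^+ 6 < v ξ) -> barrier s ξ <= v ξ.
Proof.
move=> D0 K0 ε0 v0 near_y.
have [close|far] := ltP `|ξ - y| ε.
  by apply/ltW/(le_lt_trans _ (near_y close)); exact: barrier_le.
have : barrier s ξ <= 0 by rewrite barrier_le0_far ?bump_center_start // ltW.
lra.
Qed.

Lemma barrier_subsolution (x1 x2 δ τ ξ N : R) :
  0 < x1 -> 0 < ε -> 0 <= D -> x1 <= ξ <= x2 -> 0 <= N <= δ -> 0 <= bump_gap τ ξ ->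
  (30 * x2 ^+ 2 + 6 * (x2 ^+ 2 + 2 * δ + `|c|) * ε) ^+ 2 <=
    4 * (K - 2) * (24 * x1 ^+ 2 * ε ^+ 2) ->
  barrier_dt τ ξ <= ξ ^+ 2 * barrier_dxx τ ξ + (ξ ^+ 2 + 2 * N) * barrier_dx τ ξ
                    - 2 * barrier τ ξ.
Proof.
move=> x10 ε0 D0 /andP [x1ξ ξx2] /andP [N0 Nδ] gap0 K_large.
rewrite -subr_ge0 /barrier_dt /barrier_dxx /barrier_dx /barrier.
set A := bump_amplitude τ; set ζ := ξ - bump_center τ; set u := bump_gap τ ξ.
set β := ξ ^+ 2 + 2 * N + c; set B := x2 ^+ 2 + 2 * δ + `|c|.
have ζ_gap : ζ ^+ 2 = ε ^+ 2 - u by rewrite /u /ζ /bump_gap; ring.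
(* Once [A u >= 0] is factored out, the claim is [0 <= Φ]; bounding the
   coefficients of [Φ] on the rectangle leaves a quadratic in [u] whose
   discriminant is nonpositive by the choice of [K]. *)
pose Φ := (K - 2) * u ^+ 2 - 30 * ξ ^+ 2 * u + 24 * ξ ^+ 2 * ε ^+ 2 - 6 * β * ζ * u.
have -> : ξ ^+ 2 * (A * (- 6 * u ^+ 2 + 24 * ζ ^+ 2 * u)) + (ξ ^+ 2 + 2 * N) *
    (A * (- 6 * ζ * u ^+ 2)) - 2 * (A * u ^+ 3) - A * (- K * u ^+ 3 + 6 * c * ζ * u ^+ 2)
    = A * u * Φ by rewrite /Φ /β ζ_gap; ring.
rewrite mulr_ge0 ?mulr_ge0 ?expR_ge0 //.
have u0 : 0 <= u by [].
have ζε : - ε <= ζ <= ε by apply/andP; split; nra.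
have βB : - B <= β <= B by rewrite /β /B; apply/andP; split;
  have := ler_norm c; have := ler_norm (- c); rewrite normrN; nra.
have βζ : β * ζ * u <= B * ε * u by rewrite ler_wpM2r //; nra.
have ξ2u : ξ ^+ 2 * u <= x2 ^+ 2 * u by rewrite ler_wpM2r //; nra.
have x1ε : x1 ^+ 2 * ε ^+ 2 <= ξ ^+ 2 * ε ^+ 2 by rewrite ler_wpM2r ?sqr_ge0 //; nra.
have := @quadratic_ge0 _ (K - 2) (30 * x2 ^+ 2 + 6 * B * ε) (24 * x1 ^+ 2 * ε ^+ 2) u.
rewrite !mulr_gt0 ?exprn_gt0 // => /(_ isT K_large).
rewrite /Φ; lra.
Qed.

Lemma barrier_strict_subsolution (x1 x2 τ ξ N : R) :
  0 < x1 -> 0 < ε -> 0 < D -> s <= τ -> x1 <= ξ <= x2 ->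
  (30 * x2 ^+ 2 + 6 * (x2 ^+ 2 + 2 * (D * ε ^+ 6) + `|c|) * ε) ^+ 2 <=
    4 * (K - 2) * (24 * x1 ^+ 2 * ε ^+ 2) ->
  0 <= N < barrier τ ξ ->
  barrier_dt τ ξ < ξ ^+ 2 * barrier_dxx τ ξ + (ξ ^+ 2 + 2 * N) * barrier_dx τ ξ
                   + (2 * ξ - 2) * N.
Proof.
move=> x10 ε0 D0 sτ ξI K_large /andP [N0 Nw].
have K0 : 0 <= K.
  have := le_trans (sqr_ge0 _) K_large.
  rewrite pmulr_lge0 ?mulr_gt0 ?exprn_gt0 //; lra.
have gap0 : 0 <= bump_gap τ ξ.
  rewrite leNgt; apply/negP => /ltW /(barrier_le0 (ltW D0)); lra.
have Nδ : N <= D * ε ^+ 6 by rewrite ltW // (lt_le_trans Nw) // barrier_le // ltW.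
have := barrier_subsolution x10 ε0 (ltW D0) ξI (introT andP (conj N0 Nδ)) gap0 K_large.
(* [N < barrier] turns [-2 barrier] into a strict lower bound for [(2ξ - 2) N]. *)
have : 0 <= ξ * N by rewrite mulr_ge0 //; case/andP: ξI; lra.
lra.
Qed.

End Barrier.

Section Comparison.
Variables (R : realType) (n : R -> R -> R).
Hypothesis n_ge0 : forall t x, 0 < t -> 0 < x -> 0 <= n t x.
Hypothesis n_C21 : C21 n.
Hypothesis n_pde : forall t x, 0 < t -> 0 < x -> dt n t x = dx (flux n) t x.
Variables (w wx wxx wt : R -> R -> R).
Hypothesis w_x : forall τ ξ : R, is_derive ξ 1 (w τ) (wx τ ξ).
Hypothesis w_xx : forall τ ξ : R, is_derive ξ 1 (wx τ) (wxx τ ξ).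
Hypothesis w_t : forall τ ξ : R, is_derive τ 1 (w^~ ξ) (wt τ ξ).

Lemma derivatives_at_interior_min (s x1 x2 τ0 ξ0 : R) : 0 < s -> s < τ0 -> 0 < x1 ->
  x1 < ξ0 -> ξ0 < x2 ->
  (forall τ ξ, s <= τ <= τ0 -> x1 <= ξ <= x2 -> n τ0 ξ0 - w τ0 ξ0 <= n τ ξ - w τ ξ) ->
  [/\ dx n τ0 ξ0 = wx τ0 ξ0, wxx τ0 ξ0 <= dx (dx n) τ0 ξ0 & dt n τ0 ξ0 <= wt τ0 ξ0].
Proof.
move=> s0 sτ0 x10 x1ξ0 ξ0x2 zmin.
have τ0_gt0 : 0 < τ0 by lra.
have ξ0_gt0 : 0 < ξ0 by lra.
have dx_slice ξ : x1 < ξ < x2 -> is_derive ξ 1 (n τ0 - w τ0) (dx n τ0 ξ - wx τ0 ξ).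
  move=> /andP [x1ξ _]; have [/derivableP dn _ _ _ _] := n_C21 τ0_gt0 (lt_trans x10 x1ξ).
  by rewrite dxE; apply: is_deriveB.
have dxx_slice : is_derive ξ0 1 (dx n τ0 - wx τ0) (dx (dx n) τ0 ξ0 - wxx τ0 ξ0).
  have [_ /derivableP dn _ _ _] := n_C21 τ0_gt0 ξ0_gt0.
  by rewrite dxE; apply: is_deriveB.
have dt_slice : is_derive τ0 1 (n^~ ξ0 - w^~ ξ0) (dt n τ0 ξ0 - wt τ0 ξ0).
  have [_ _ /derivableP dn _ _] := n_C21 τ0_gt0 ξ0_gt0.
  by rewrite dtE; apply: is_deriveB.
have x_min ξ : x1 < ξ < x2 -> (n τ0 - w τ0) ξ0 <= (n τ0 - w τ0) ξ.
  by move=> /andP [? ?]; apply: zmin; apply/andP; split; lra.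
have t_min τ : s < τ < τ0 -> (n^~ ξ0 - w^~ ξ0) τ0 <= (n^~ ξ0 - w^~ ξ0) τ.
  by move=> /andP [? ?]; apply: zmin; apply/andP; split; lra.
have := derive_eq0_at_min x1ξ0 ξ0x2 dx_slice x_min.
have := derive2_ge0_at_min x1ξ0 ξ0x2 dx_slice dxx_slice x_min.
have := derive_le0_at_left_min sτ0 dt_slice t_min.
by split; lra.
Qed.

Lemma comparison_on_rectangle (s t x1 x2 : R) : 0 < s -> 0 < x1 ->
  (forall p, {for p, continuous (fun q : R * R => w q.1 q.2)}) ->
  (forall τ ξ N, s < τ <= t -> x1 < ξ < x2 -> 0 <= N < w τ ξ ->
     wt τ ξ < ξ ^+ 2 * wxx τ ξ + (ξ ^+ 2 + 2 * N) * wx τ ξ + (2 * ξ - 2) * N) ->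
  (forall ξ, x1 <= ξ <= x2 -> w s ξ <= n s ξ) ->
  (forall τ, s <= τ <= t -> w τ x1 <= n τ x1 /\ w τ x2 <= n τ x2) ->
  forall τ ξ, s <= τ <= t -> x1 <= ξ <= x2 -> w τ ξ <= n τ ξ.
Proof.
move=> s0 x10 w_cont w_sub bottom sides τ ξ τI ξI.
pose z (p : R * R) := n p.1 p.2 - w p.1 p.2.
pose A := `[s, t] `*` `[x1, x2].
have A_compact : compact A by apply: compact_setX; exact: segment_compact.
have A_nonempty : A !=set0 by exists (τ, ξ); split; rewrite /= in_itv.
have z_cont : {within A, continuous z}.
  apply: continuous_in_subspaceT => -[τ' ξ'].
  rewrite inE => -[/=]; rewrite !in_itv /= => /andP [sτ' _] /andP [x1ξ' _].
  have [_ _ _ n_cont _] := n_C21 (lt_le_trans s0 sτ') (lt_le_trans x10 x1ξ').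
  exact: continuousB n_cont (w_cont _).
have inA τ' ξ' : s <= τ' <= t -> x1 <= ξ' <= x2 -> (τ', ξ') \in A.
  by move=> ? ?; rewrite inE; split; rewrite /= in_itv.
have [[τ0 ξ0] + zmin] := compact_EVT_min A_nonempty A_compact z_cont.
rewrite inE => -[/=]; rewrite !in_itv /= => /andP [sτ0 τ0t] /andP [x1ξ0 ξ0x2].
suff : 0 <= z (τ0, ξ0) by have := zmin _ (inA _ _ τI ξI); rewrite /z /=; lra.
rewrite leNgt; apply/negP => z_neg.
have /andP [s_τ0 x1_ξ0] : (s < τ0) && (x1 < ξ0).
  rewrite !lt_neqAle sτ0 x1ξ0 !andbT; apply/andP; split; apply/eqP => eq0.
    by have := bottom ξ0 (introT andP (conj x1ξ0 ξ0x2)); move: z_neg; rewrite /z /= -eq0; lra.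
  by have := sides τ0 (introT andP (conj sτ0 τ0t)); move: z_neg; rewrite /z /= -eq0; lra.
have ξ0_x2 : ξ0 < x2.
  rewrite lt_neqAle ξ0x2 andbT; apply/eqP => eq0.
  by have := sides τ0 (introT andP (conj sτ0 τ0t)); move: z_neg; rewrite /z /= eq0; lra.
have [nx nxx nt] : [/\ dx n τ0 ξ0 = wx τ0 ξ0, wxx τ0 ξ0 <= dx (dx n) τ0 ξ0
                     & dt n τ0 ξ0 <= wt τ0 ξ0].
  apply: derivatives_at_interior_min s_τ0 x10 x1_ξ0 ξ0_x2 _ => // τ' ξ' τ'I ξ'I.
  apply: (zmin (τ', ξ')); apply: inA ξ'I; case/andP: τ'I => ? ?; apply/andP; split; lra.
have τ0_gt0 : 0 < τ0 by lra.
have ξ0_gt0 : 0 < ξ0 by lra.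
have [d1 d2 _ _ _] := n_C21 τ0_gt0 ξ0_gt0.
have := n_pde τ0_gt0 ξ0_gt0; rewrite dx_flux // nx => pde0.
have := w_sub τ0 ξ0 (n τ0 ξ0) (introT andP (conj s_τ0 τ0t)) (introT andP (conj x1_ξ0 ξ0_x2)).
rewrite n_ge0 //= => /(_ ltac:(move: z_neg; rewrite /z /=; lra)).
have : ξ0 ^+ 2 * wxx τ0 ξ0 <= ξ0 ^+ 2 * dx (dx n) τ0 ξ0 by rewrite ler_wpM2l ?sqr_ge0.
lra.
Qed.

End Comparison.

Section Positivity.
Variables (R : realType) (n : R -> R -> R).
Hypothesis n_ge0 : forall t x, 0 < t -> 0 < x -> 0 <= n t x.
Hypothesis n_C21 : C21 n.
Hypothesis n_pde : forall t x, 0 < t -> 0 < x -> dt n t x = dx (flux n) t x.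

Lemma positivity_propagates_from_ball (s t y x δ ε : R) :
  0 < s -> s < t -> 0 < y -> 0 < x -> 0 < δ -> 0 < ε -> 2 * ε <= Num.min x y ->
  (forall ξ, `|ξ - y| < ε -> δ < n s ξ) -> 0 < n t x.
Proof.
move=> s0 st y0 x0 δ0 ε0 εm near_y.
set m := Num.min x y in εm *; set M := Num.max x y.
have mxM : m <= x <= M by rewrite ge_min le_max lexx.
have myM : m <= y <= M by rewrite ge_min le_max lexx !orbT.
(* The centre stays in [m, M], so [x1, x2] contains its ε-tube since 2ε <= m. *)
pose x1 := m / 4; pose x2 := M + ε; pose c := (x - y) / (t - s).
have m0 : 0 < m by rewrite lt_min x0 y0.
have x1_pos : 0 < x1 by rewrite divr_gt0.
pose D := δ / ε ^+ 6.
have Dε : D * ε ^+ 6 = δ by rewrite divfK // expf_neq0 // gt_eqF.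
have D0 : 0 < D by rewrite divr_gt0 // exprn_gt0.
pose q := 24 * x1 ^+ 2 * ε ^+ 2.
have q0 : 0 < q by rewrite !mulr_gt0 ?exprn_gt0.
pose b := 30 * x2 ^+ 2 + 6 * (x2 ^+ 2 + 2 * (D * ε ^+ 6) + `|c|) * ε.
pose K := 2 + b ^+ 2 / (4 * q).
have K_large : b ^+ 2 <= 4 * (K - 2) * q.
  by rewrite le_eqVlt; apply/orP; left; apply/eqP; rewrite /K; field; lra.
have K0 : 0 <= K by rewrite /K addr_ge0 // divr_ge0 ?sqr_ge0 //; lra.
have center τ : s <= τ <= t -> m <= bump_center s y c τ <= M.
  exact: bump_center_between st erefl mxM myM.
suff : barrier D K s y c ε t x <= n t x.
  apply: lt_le_trans; rewrite /barrier /bump_gap (bump_center_end st erefl).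
  by rewrite subrr expr0n subr0 mulr_gt0 ?bump_amplitude_gt0 // !exprn_gt0.
apply: (comparison_on_rectangle (t := t) (x2 := x2) n_ge0 n_C21 n_pde (@is_derive_barrier_x R D K s y c ε)
  (@is_derive_barrier_xx R D K s y c ε) (@is_derive_barrier_t R D K s y c ε) s0 x1_pos).
- exact: barrier_continuous.
- move=> τ ξ N /andP [sτ _] /andP [x1ξ ξx2].
  apply: (barrier_strict_subsolution (x2 := x2) x1_pos ε0 D0 (ltW sτ)) => //.
  by rewrite !ltW.
- move=> ξ /andP [x1ξ _]; apply: barrier_start_le (ltW D0) K0 ε0 _ _.
    by apply: n_ge0; lra.
  by rewrite Dε; apply: near_y.
- move=> τ τI; have /andP [cm cM] := center τ τI.
  have τ0 : 0 < τ by case/andP: τI; lra.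
  have far_below ξ : 0 < ξ -> ε <= `|ξ - bump_center s y c τ| ->
      barrier D K s y c ε τ ξ <= n τ ξ.
    move=> ξ0 far; have : barrier D K s y c ε τ ξ <= 0.
      by apply: barrier_le0_far; rewrite // ltW.
    by have := n_ge0 τ0 ξ0; lra.
  split; apply: far_below.
  + exact: x1_pos.
  + by rewrite distrC ger0_norm /x1; lra.
  + by rewrite /x2; lra.
  + by rewrite ger0_norm /x2; lra.
- by rewrite ltW ?lexx.
- by case/andP: mxM => ? ?; apply/andP; split; rewrite /x1 /x2; lra.
Qed.

Lemma positivity_propagates (s t y x : R) :
  0 < s -> s < t -> 0 < y -> 0 < x -> 0 < n s y -> 0 < n t x.
Proof.
move=> s0 st y0 x0 nsy.
have δ0 : 0 < n s y / 2 by rewrite divr_gt0.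
have [ε0 ε0_gt0 near_y] : exists2 ε0, 0 < ε0 & forall ξ, `|ξ - y| < ε0 -> n s y / 2 < n s ξ.
  have [/derivable1_diffP/differentiable_continuous ns_cont _ _ _ _] := n_C21 s0 y0.
  have [e /= e0 close] := @cvgr_dist_lt _ _ _ _ _ (n s) (n s y) ns_cont _ δ0.
  exists e => // ξ /[dup] ξy; rewrite distrC => /close /ltr_normlP [_]; lra.
pose ε := Num.min ε0 (Num.min x y / 2).
have ε_gt0 : 0 < ε by rewrite !lt_min ε0_gt0 divr_gt0 ?lt_min ?x0.
apply: (positivity_propagates_from_ball s0 st y0 x0 δ0 ε_gt0).
  by rewrite -ler_pdivlMl // mulrC ge_min lexx orbT.
by move=> ξ ξy; apply: near_y; rewrite (lt_le_trans ξy) // ge_min lexx.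
Qed.

End Positivity.

Lemma CL1_vanishing_initial_datum (R : realType) (n : R -> R -> R) (n0 : R -> R) (t : R) :
  CL1 n n0 -> 0 < t -> (forall s x, 0 < s -> s < t -> 0 < x -> n s x = 0) ->
  {ae @lebesgue_measure R, forall x, halfline x -> n0 x = 0}.
Proof.
move=> [n_int [n_init n_cont]] t0 n_vanish.
pose I := (\int[@lebesgue_measure R]_(x in @halfline R) (`|n 0 x|)%:E)%E.
pose F s := (\int[@lebesgue_measure R]_(x in @halfline R) (`|n s x - n 0 x|)%:E)%E.
(* [F] tends to [0] by L^1 continuity but equals [I] on (0, t) *)
have F0 : F @ 0^'+ --> 0%E.
  apply: cvg_trans (n_cont 0 (lexx 0)); apply: cvg_app.
  move=> A [e e0 Ae]; exists e => // x xe x0; apply: Ae => //; exact: ltW.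
have FI : F @ 0^'+ --> I.
  apply: cvg_trans (near_eq_cvg _) (cvg_cst I).
  near=> s; have s0 : 0 < s by near: s; exact: nbhs_right_gt.
  have st : s < t by near: s; exact: nbhs_right_lt.
  apply: eq_integral => x; rewrite inE /halfline /= in_itv /= andbT => x0.
  by rewrite (n_vanish s x) // sub0r normrN.
have I0 : I = 0%E by exact: (cvg_unique _ FI F0).
have /integrableP [n0_meas _] := n_int 0 (lexx 0).
have := (ae_eq_integral_abs (@lebesgue_measure R) (measurable_itv _) n0_meas).1.
have -> : (\int[@lebesgue_measure R]_(x in @halfline R) `|(n 0 x)%:E|)%E = I.
  by apply: eq_integral => x _; rewrite abse_EFin.
move=> /(_ I0) n00_ae; apply: filterS2 n00_ae n_init => x n00 n0n xI.
by have := n00 xI; rewrite -(n0n xI) => -[].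
Unshelve. all: by end_near. Qed.

Theorem lemma5p1 (R : realType) (n0 : R -> R) (n : R -> R -> R) :
  measurable_fun (@halfline R) n0 ->
  (forall x, 0 < x -> 0 <= n0 x) ->
  (exists M : R, forall x, 0 < x -> `|n0 x| <= M) ->
  x ^+ 2 * n0 x @[x --> +oo] --> 0 ->
  kompaneets_solution n n0 ->
  ~ {ae (@lebesgue_measure R), forall x, @halfline R x -> n0 x = 0} ->
  forall t x, 0 < t -> 0 < x -> 0 < n t x.
Proof.
(* The hypotheses on [n0] serve the existence theory only. *)
move=> _ _ _ _ [n_ge0 [n_CL1 _] n_C21 n_pde _] n0_nonzero t x t0 x0.
have [s [y [s0 st y0 nsy]]] : exists s y, [/\ 0 < s, s < t, 0 < y & 0 < n s y].
  apply: contrapT => no_positive; apply/n0_nonzero/(CL1_vanishing_initial_datum n_CL1 t0).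
  move=> s ξ s0 st ξ0; apply/eqP; rewrite eq_le n_ge0 // andbT leNgt.
  by apply/negP => pos; apply: no_positive; exists s, ξ.
exact: (positivity_propagates n_ge0 n_C21 n_pde s0 st y0 x0 nsy).
Qed.
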